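(* If $P$ is an interval order, then the set $\mathcal{J}^{\neg\downarrow}(P)$ of non-principal ideals of $P$ is a chain under inclusion.
   Context: A poset $P$ is an interval order if it is isomorphic to a set of nonempty intervals of some chain $C$, ordered by $I<J$ iff $x<y$ for every $x\in I$ and every $y\in J$. An ideal of $P$ is a nonempty initial segment of $P$ (closed downward) which is up-directed (any two elements have an upper bound in it); it is principal if it has a largest element. *)

From Stdlib Require Import Classical.

Definition is_partial_order {T : Type} (le : T -> T -> Prop) : Prop :=
  (forall x, le x x) /\
  (forall x y, le x y -> le y x -> x = y) /\
  (forall x y z, le x y -> le y z -> le x z).

Definition is_total_order {C : Type} (le : C -> C -> Prop) : Prop :=
  is_partial_order le /\ (forall x y, le x y \/ le y x).

Definition strict {T : Type} (le : T -> T -> Prop) (x y : T) : Prop :=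
  le x y /\ x <> y.

Definition is_interval {C : Type} (leC : C -> C -> Prop) (I : C -> Prop) : Prop :=
  (exists c, I c) /\
  (forall a b c, I a -> I c -> leC a b -> leC b c -> I b).

Definition interval_lt {C : Type} (leC : C -> C -> Prop) (I J : C -> Prop) : Prop :=
  forall x y, I x -> J y -> strict leC x y.

(* P is an interval order: isomorphic to a set of nonempty intervals of some
   chain, i.e. there is an injective map f into nonempty intervals of a chain
   with x < y in P iff f x < f y (an isomorphism onto its image). *)
Definition interval_order {T : Type} (le : T -> T -> Prop) : Prop :=
  exists (C : Type) (leC : C -> C -> Prop) (f : T -> (C -> Prop)),
    is_total_order leC /\
    (forall x, is_interval leC (f x)) /\
    (forall x y, f x = f y -> x = y) /\
    (forall x y, strict le x y <-> interval_lt leC (f x) (f y)).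

Definition is_ideal {T : Type} (le : T -> T -> Prop) (I : T -> Prop) : Prop :=
  (exists x, I x) /\
  (forall x y, le x y -> I y -> I x) /\
  (forall x y, I x -> I y -> exists z, I z /\ le x z /\ le y z).

Definition is_principal {T : Type} (le : T -> T -> Prop) (I : T -> Prop) : Prop :=
  exists m, I m /\ forall x, I x -> le x m.

Definition is_nonprincipal_ideal {T : Type} (le : T -> T -> Prop) (I : T -> Prop) : Prop :=
  is_ideal le I /\ ~ is_principal le I.

Definition subset {T : Type} (A B : T -> Prop) : Prop := forall x, A x -> B x.

(* An interval order contains no 2+2: if a < a' and b < b', then a < b' or
   b < a', for otherwise, with x, y, u, v points of the intervals of a, b',
   b, a' witnessing the two failures, the chain would contain the cycle
   y <= x < v <= u < y.  A non-principal ideal has no largest element, so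
   each of its elements lies strictly below another one.  Hence from a in
   I \ J and b in J \ I we would get a < a' in I and b < b' in J, and either
   alternative puts a in J or b in I by downward closure. *)
From Stdlib Require Import Classical.

Definition two_plus_two_free {T : Type} (le : T -> T -> Prop) : Prop :=
  forall a a' b b', strict le a a' -> strict le b b' ->
    strict le a b' \/ strict le b a'.

Lemma total_not_strict_le {C : Type} (leC : C -> C -> Prop) (x y : C) :
  is_total_order leC -> ~ strict leC x y -> leC y x.
Proof.
  intros [[Crefl _] Ctot] Nxy.
  destruct (Ctot x y) as [Lxy | Lyx]; [| exact Lyx].
  destruct (classic (x = y)) as [-> | Exy]; [apply Crefl |].
  exfalso; apply Nxy; split; assumption.
Qed.

Lemma not_interval_lt {C : Type} (leC : C -> C -> Prop) (A B : C -> Prop) :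
  is_total_order leC -> ~ interval_lt leC A B ->
  exists x y, A x /\ B y /\ leC y x.
Proof.
  intros Ctotal NAB.
  apply NNPP; intro Nex; apply NAB; intros x y Ax By.
  apply NNPP; intro Nxy; apply Nex.
  exists x, y; repeat split; [exact Ax | exact By |].
  exact (total_not_strict_le leC x y Ctotal Nxy).
Qed.

Lemma interval_lt_no_two_plus_two {C : Type} (leC : C -> C -> Prop)
    (A A' B B' : C -> Prop) :
  is_total_order leC -> interval_lt leC A A' -> interval_lt leC B B' ->
  interval_lt leC A B' \/ interval_lt leC B A'.
Proof.
  intros Ctotal AA' BB'.
  pose proof Ctotal as [[_ [Canti Ctrans]] _].
  apply NNPP; intro N; apply not_or_and in N as [NAB' NBA'].
  destruct (not_interval_lt leC A B' Ctotal NAB') as [x [y [Ax [B'y Lyx]]]].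
  destruct (not_interval_lt leC B A' Ctotal NBA') as [u [v [Bu [A'v Lvu]]]].
  destruct (AA' x v Ax A'v) as [Lxv _].
  destruct (BB' u y Bu B'y) as [Luy Nuy].
  apply Nuy, Canti; [exact Luy |].
  exact (Ctrans _ _ _ Lyx (Ctrans _ _ _ Lxv Lvu)).
Qed.

Lemma interval_order_two_plus_two_free {T : Type} (le : T -> T -> Prop) :
  interval_order le -> two_plus_two_free le.
Proof.
  intros [C [leC [f [Ctotal [_ [_ Hiff]]]]]] a a' b b' Haa' Hbb'.
  rewrite !Hiff in *.
  exact (interval_lt_no_two_plus_two leC _ _ _ _ Ctotal Haa' Hbb').
Qed.

Lemma nonprincipal_ideal_strict_upper {T : Type} (le : T -> T -> Prop)
    (I : T -> Prop) (x : T) :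
  is_nonprincipal_ideal le I -> I x -> exists y, I y /\ strict le x y.
Proof.
  intros [[_ [_ Idir]] Inp] Ix.
  destruct (classic (exists z, I z /\ ~ le z x)) as [[z [Iz Nzx]] | Nex].
  - destruct (Idir x z Ix Iz) as [w [Iw [Lxw Lzw]]].
    exists w; repeat split; [exact Iw | exact Lxw |].
    intros <-; exact (Nzx Lzw).
  - exfalso; apply Inp; exists x; split; [exact Ix |].
    intros y Iy; apply NNPP; intro Nyx; apply Nex; exists y; auto.
Qed.

Lemma nonprincipal_ideals_comparable {T : Type} (le : T -> T -> Prop)
    (I J : T -> Prop) :
  two_plus_two_free le ->
  is_nonprincipal_ideal le I -> is_nonprincipal_ideal le J ->
  subset I J \/ subset J I.
Proof.
  intros Hfree HI HJ.
  destruct (classic (subset I J)) as [IJ | NIJ]; [left; exact IJ | right].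
  destruct (not_all_ex_not _ _ NIJ) as [a Ha].
  apply imply_to_and in Ha as [Ia NJa].
  intros b Jb; apply NNPP; intro NIb.
  destruct (nonprincipal_ideal_strict_upper le I a HI Ia) as [a' [Ia' Laa']].
  destruct (nonprincipal_ideal_strict_upper le J b HJ Jb) as [b' [Jb' Lbb']].
  destruct HI as [[_ [Idown _]] _], HJ as [[_ [Jdown _]] _].
  destruct (Hfree a a' b b' Laa' Lbb') as [[Lab' _] | [Lba' _]].
  - exact (NJa (Jdown a b' Lab' Jb')).
  - exact (NIb (Idown b a' Lba' Ia')).
Qed.

Theorem lemma1p4 (T : Type) (le : T -> T -> Prop) :
  is_partial_order le -> interval_order le ->
  forall I J : T -> Prop,
    is_nonprincipal_ideal le I -> is_nonprincipal_ideal le J ->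
    subset I J \/ subset J I.
Proof.
  intros _ Hint I J.
  apply nonprincipal_ideals_comparable, interval_order_two_plus_two_free, Hint.
Qed.
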